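(* Let $p\ge 2$ be an integer and $0<\varphi<2\pi/p$. In the Poincaré disc model of the hyperbolic plane consider the ideal points $v_m=e^{2\pi i m/p}$ and $w_m=e^{i(\varphi+2\pi m/p)}$, $m\in\mathbb Z$ (indices mod $p$). Choose horocycles based at all these points so that the family of horocycles is invariant under the rotation $z\mapsto e^{2\pi i/p}z$ (i.e. the horocycle at $v_{m+1}$ is the rotated horocycle at $v_m$, and likewise for the $w_m$). Let $c=\lambda(v_0,v_1)$, $c'=\lambda(w_0,w_1)$, $a=\lambda(v_0,w_0)$ and $b=\lambda(w_0,v_1)$. Then $$cc'=a^2+2\cos(\pi/p)\,ab+b^2.$$
   Context: For two distinct ideal points $x,y$ with chosen horocycles $h_x,h_y$, the $\lambda$-length is $\lambda(x,y)=e^{\ell/2}$, where $\ell$ is the signed hyperbolic length of the segment of the geodesic joining $x$ and $y$ that lies between $h_x$ and $h_y$ ($\ell$ is negative when the horocycles overlap). Geometrically, $v_0,\dots,v_{p-1}$ are the vertices of an ideal equilateral $p$-gon centered at a $\mathbb Z_p$-orbifold point, with ideal triangles $v_m w_m v_{m+1}$ attached to its sides; $c$ and $c'$ are the $\lambda$-lengths of a side before and after the flip. *)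

(* concrete real numbers R; points of the plane as pairs R*R,
   identified with complex numbers x + i y.  Poincare disc model. *)
From Stdlib Require Import Reals ZArith.
Open Scope R_scope.

Definition pt := (R * R)%type.

Definition nrm2 (z : pt) : R := fst z * fst z + snd z * snd z.
Definition dist2 (z w : pt) : R :=
  (fst z - fst w) * (fst z - fst w) + (snd z - snd w) * (snd z - snd w).

Definition cis (t : R) : pt := (cos t, sin t).

Definition vpt (p : nat) (m : Z) : pt := cis (2 * PI * IZR m / INR p).
Definition wpt (p : nat) (phi : R) (m : Z) : pt :=
  cis (phi + 2 * PI * IZR m / INR p).

Definition rot (p : nat) (z : pt) : pt :=
  let t := 2 * PI / INR p in
  (cos t * fst z - sin t * snd z, sin t * fst z + cos t * snd z).

Definition in_disc (z : pt) : Prop := nrm2 z < 1.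

Definition arcosh (t : R) : R := ln (t + sqrt (t * t - 1)).
Definition hdist (z w : pt) : R :=
  arcosh (1 + 2 * dist2 z w / ((1 - nrm2 z) * (1 - nrm2 w))).

(* The horocycle based at the ideal point xi (|xi| = 1) with Euclidean
   radius r in (0,1): the Euclidean circle of radius r centred at (1-r) xi
   (internally tangent to the unit circle at xi), with xi removed. *)
Definition hcirc (xi : pt) (r : R) (z : pt) : Prop :=
  dist2 z ((1 - r) * fst xi, (1 - r) * snd xi) = r * r /\ z <> xi.
Definition hball (xi : pt) (r : R) (z : pt) : Prop :=
  dist2 z ((1 - r) * fst xi, (1 - r) * snd xi) < r * r.

Definition is_horocycle_at (xi : pt) (H : pt -> Prop) : Prop :=
  exists r, 0 < r < 1 /\ forall z, H z <-> hcirc xi r z.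

(* z lies on the hyperbolic geodesic joining the ideal points x and y:
   z is in the disc and on a generalized circle
   A|z|^2 - 2 Re(z conj c) + A = 0 (orthogonal to the unit circle)
   passing through x and y (i.e. Re(x conj c) = A = Re(y conj c)). *)
Definition on_geod (x y z : pt) : Prop :=
  in_disc z /\
  exists (A : R) (c : pt), (A <> 0 \/ c <> (0, 0)) /\
    fst x * fst c + snd x * snd c = A /\
    fst y * fst c + snd y * snd c = A /\
    A * nrm2 z - 2 * (fst z * fst c + snd z * snd c) + A = 0.

(* lam x Hx y Hy L : L is the lambda-length lambda(x,y) = e^{l/2} for the
   horocycles Hx (at x) and Hy (at y), where l is the signed hyperbolic
   length of the segment of the geodesic xy between Hx and Hy.  Px, Py are
   the points where the geodesic meets Hx, Hy; l = -d(Px,Py) when the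
   horocycles overlap (Px then lies inside the horoball of Hy), and
   l = d(Px,Py) otherwise. *)
Definition lam (x : pt) (Hx : pt -> Prop) (y : pt) (Hy : pt -> Prop)
  (L : R) : Prop :=
  exists rx ry Px Py,
    0 < rx < 1 /\ 0 < ry < 1 /\
    (forall z, Hx z <-> hcirc x rx z) /\ (forall z, Hy z <-> hcirc y ry z) /\
    on_geod x y Px /\ hcirc x rx Px /\
    on_geod x y Py /\ hcirc y ry Py /\
    (hball y ry Px -> L = exp (- hdist Px Py / 2)) /\
    (~ hball y ry Px -> L = exp (hdist Px Py / 2)).

(* Rotate so that one ideal point is [1] and apply the Cayley transform onto
   the upper half plane.  The geodesic from [1] to [y] becomes a vertical line,
   the horocycle at [1] of Euclidean radius [r] the horizontal line at height
   [(1 - r) / r], and the horocycle at [y] of radius [r'] meets the line at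
   height [4 r' / ((1 - r') |y - 1|^2)]; distances along a vertical line are
   [|ln|] of height ratios.  Hence [lambda(x, y)^2 = s_x s_y |x - y|^2 / 4] with
   [s = (1 - r) / r].  By rotation invariance all horocycles at the [v_m] share
   one radius, and likewise at the [w_m]; the chords are [2 sin (pi / p)],
   [2 sin (phi / 2)] and [2 sin (pi / p - phi / 2)], and the theorem becomes
   [sin (a + b)^2 = sin a^2 + 2 cos (a + b) sin a sin b + sin b^2]. *)

From Stdlib Require Import Reals ZArith Lra Lia.
Open Scope R_scope.

Definition dot (a b : pt) : R := fst a * fst b + snd a * snd b.

(* [turn u z] is the complex product [conj u * z]; for [|u| = 1] it is the
   rotation of the disc sending [u] to [1]. *)
Definition turn (u z : pt) : pt :=
  (fst u * fst z + snd u * snd z, fst u * snd z - snd u * fst z).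

Definition cconj (u : pt) : pt := (fst u, - snd u).

Lemma nrm2_turn u z : nrm2 (turn u z) = nrm2 u * nrm2 z.
Proof. destruct u, z; unfold nrm2, turn; simpl; ring. Qed.

Lemma dist2_turn u a b : dist2 (turn u a) (turn u b) = nrm2 u * dist2 a b.
Proof. destruct u, a, b; unfold dist2, nrm2, turn; simpl; ring. Qed.

Lemma dot_turn u a b : dot (turn u a) (turn u b) = nrm2 u * dot a b.
Proof. destruct u, a, b; unfold dot, nrm2, turn; simpl; ring. Qed.

Lemma nrm2_cconj u : nrm2 (cconj u) = nrm2 u.
Proof. destruct u; unfold nrm2, cconj; simpl; ring. Qed.

Lemma turn_scale u s a :
  turn u (s * fst a, s * snd a) = (s * fst (turn u a), s * snd (turn u a)).
Proof. destruct u, a; unfold turn; simpl; f_equal; ring. Qed.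

Lemma turnK u z : nrm2 u = 1 -> turn (cconj u) (turn u z) = z.
Proof.
  destruct u as [u1 u2], z as [z1 z2]; unfold nrm2, turn, cconj; simpl; intro Hu.
  f_equal; [transitivity ((u1 * u1 + u2 * u2) * z1)
           | transitivity ((u1 * u1 + u2 * u2) * z2)]; (ring || (rewrite Hu; ring)).
Qed.

Lemma turn_inj u a b : nrm2 u = 1 -> turn u a = turn u b -> a = b.
Proof. intros Hu E. rewrite <- (turnK u a Hu), <- (turnK u b Hu), E. reflexivity. Qed.

Lemma turn_self u : nrm2 u = 1 -> turn u u = (1, 0).
Proof. destruct u; unfold nrm2, turn; simpl; intro Hu. f_equal; [exact Hu | ring]. Qed.

Lemma turn_cconj_one u : turn (cconj u) (1, 0) = u.
Proof. destruct u; unfold turn, cconj; simpl. f_equal; ring. Qed.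

Lemma on_geod_turn u x y z :
  nrm2 u = 1 -> on_geod x y z -> on_geod (turn u x) (turn u y) (turn u z).
Proof.
  intros Hu [Hz [A [c [Hnz [Hx [Hy Hc]]]]]].
  split; [unfold in_disc in *; rewrite nrm2_turn, Hu; lra |].
  exists A, (turn u c); split.
  - destruct Hnz as [HA | Hc0]; [left; exact HA | right; intro E].
    apply Hc0, (turn_inj u _ _ Hu). rewrite E. destruct u; unfold turn; simpl; f_equal; ring.
  - change (dot (turn u x) (turn u c) = A /\ dot (turn u y) (turn u c) = A /\
            A * nrm2 (turn u z) - 2 * dot (turn u z) (turn u c) + A = 0).
    rewrite !dot_turn, nrm2_turn, Hu, !Rmult_1_l. auto.
Qed.

Lemma on_geod_sym x y z : on_geod x y z -> on_geod y x z.
Proof. intros [Hz [A [c [Hnz [Hx [Hy Hc]]]]]]. split; [exact Hz |]. exists A, c. auto. Qed.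

Lemma hcirc_turn u xi r z : nrm2 u = 1 -> hcirc xi r z -> hcirc (turn u xi) r (turn u z).
Proof.
  intros Hu [Hd Hne]. split.
  - rewrite <- turn_scale, dist2_turn, Hu, Rmult_1_l. exact Hd.
  - intro E. exact (Hne (turn_inj u _ _ Hu E)).
Qed.

Lemma hball_turn u xi r z : nrm2 u = 1 -> (hball (turn u xi) r (turn u z) <-> hball xi r z).
Proof. intro Hu. unfold hball. rewrite <- turn_scale, dist2_turn, Hu, Rmult_1_l. tauto. Qed.

Lemma hdist_turn u a b : nrm2 u = 1 -> hdist (turn u a) (turn u b) = hdist a b.
Proof. intro Hu. unfold hdist. rewrite dist2_turn, !nrm2_turn, Hu, !Rmult_1_l. reflexivity. Qed.

Lemma dist2_sym a b : dist2 a b = dist2 b a.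
Proof. unfold dist2. ring. Qed.

Lemma dist2_pos_disc_one z : in_disc z -> 0 < dist2 z (1, 0).
Proof. destruct z as [z1 z2]; unfold in_disc, nrm2, dist2; simpl; intro Hz. nra. Qed.

Lemma unit_fst_lt1 y : nrm2 y = 1 -> y <> (1, 0) -> fst y < 1.
Proof.
  destruct y as [y1 y2]; unfold nrm2; simpl; intros Hy Hne.
  destruct (Rlt_or_le y1 1) as [Hlt | Hge]; [exact Hlt | exfalso].
  assert (y1 = 1) by nra. subst y1.
  assert (y2 = 0) by nra. subst y2. exact (Hne eq_refl).
Qed.

Lemma dist2_unit_one y : nrm2 y = 1 -> dist2 y (1, 0) = 2 * (1 - fst y).
Proof. destruct y as [y1 y2]; unfold nrm2, dist2; simpl; intro Hy. nra. Qed.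

Lemma dist2_unit_one_pos y : nrm2 y = 1 -> y <> (1, 0) -> 0 < dist2 y (1, 0).
Proof.
  intros Hy Hne. rewrite dist2_unit_one by exact Hy. pose proof (unit_fst_lt1 y Hy Hne). lra.
Qed.

Lemma hcirc_power xi r z : nrm2 xi = 1 ->
  dist2 z ((1 - r) * fst xi, (1 - r) * snd xi) - r * r
  = (1 - r) * dist2 z xi - r * (1 - nrm2 z).
Proof.
  destruct xi as [a b], z as [z1 z2]; unfold nrm2, dist2; simpl; intro H.
  transitivity ((1 - r) * ((z1 - a) * (z1 - a) + (z2 - b) * (z2 - b))
                - r * (1 - (z1 * z1 + z2 * z2)) - r * (1 - r) * (a * a + b * b - 1)); [ring |].
  rewrite H. ring.
Qed.

Lemma hcirc_iff xi r z : nrm2 xi = 1 ->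
  hcirc xi r z <-> (1 - r) * dist2 z xi = r * (1 - nrm2 z) /\ z <> xi.
Proof. intro H. pose proof (hcirc_power xi r z H). unfold hcirc. split; intros [E Hne]; split; auto; lra. Qed.

Lemma hball_iff xi r z : nrm2 xi = 1 ->
  hball xi r z <-> (1 - r) * dist2 z xi < r * (1 - nrm2 z).
Proof. intro H. pose proof (hcirc_power xi r z H). unfold hball. split; intro; lra. Qed.

Lemma hcirc_opposite xi r : nrm2 xi = 1 -> 0 < r ->
  hcirc xi r ((1 - 2 * r) * fst xi, (1 - 2 * r) * snd xi).
Proof.
  destruct xi as [a b]; unfold nrm2, hcirc, dist2; simpl; intros H Hr. split.
  - transitivity (r * r * (a * a + b * b)); [ring | rewrite H; ring].
  - intro E. injection E as Ea Eb. nra.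
Qed.

Lemma hcirc_opposite_radius xi r r' : nrm2 xi = 1 -> 0 < r ->
  hcirc xi r' ((1 - 2 * r) * fst xi, (1 - 2 * r) * snd xi) -> r = r'.
Proof.
  destruct xi as [a b]; unfold nrm2, hcirc, dist2; simpl; intros Hxi Hr [Hd _].
  assert (Hsq : (r' - 2 * r) * (r' - 2 * r) * (a * a + b * b) = r' * r')
    by (rewrite <- Hd; ring).
  rewrite Hxi in Hsq. nra.
Qed.

Lemma hcirc_radius_unique xi r r' (H : pt -> Prop) : nrm2 xi = 1 -> 0 < r ->
  (forall z, H z <-> hcirc xi r z) -> (forall z, H z <-> hcirc xi r' z) -> r = r'.
Proof.
  intros Hxi Hr E E'. apply (hcirc_opposite_radius xi); [exact Hxi | exact Hr |].
  apply E', E, hcirc_opposite; assumption.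
Qed.

(* The Cayley transform [z |-> i (1 + z) / (1 - z)], mapping the disc onto the
   upper half plane and the ideal point [1] to infinity: geodesics ending at [1]
   become vertical lines and horocycles at [1] horizontal lines. *)
Definition cayley_re (z : pt) : R := -2 * snd z / dist2 z (1, 0).
Definition cayley_im (z : pt) : R := (1 - nrm2 z) / dist2 z (1, 0).

Definition cayley_inv (X Y : R) : pt :=
  let N := X * X + (Y + 1) * (Y + 1) in ((X * X + Y * Y - 1) / N, -2 * X / N).

Lemma cayley_dist2 z w : dist2 z (1, 0) <> 0 -> dist2 w (1, 0) <> 0 ->
  (cayley_re z - cayley_re w) ^ 2 + (cayley_im z - cayley_im w) ^ 2
  = 4 * dist2 z w / (dist2 z (1, 0) * dist2 w (1, 0)).
Proof.
  destruct z as [z1 z2], w as [w1 w2]; unfold cayley_re, cayley_im, dist2, nrm2; simpl.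
  rewrite !Rminus_0_r. intros Hz Hw. field. auto.
Qed.

Lemma cayley_im_pos z : in_disc z -> 0 < cayley_im z.
Proof.
  intro Hz. unfold cayley_im. apply Rdiv_lt_0_compat; [unfold in_disc in Hz; lra |].
  exact (dist2_pos_disc_one z Hz).
Qed.

Lemma cayley_im_unit y : nrm2 y = 1 -> cayley_im y = 0.
Proof. intro Hy. unfold cayley_im. rewrite Hy. unfold Rdiv. ring. Qed.

Lemma cayley_re_unit y : nrm2 y = 1 -> y <> (1, 0) -> cayley_re y = - snd y / (1 - fst y).
Proof.
  intros Hy Hne. pose proof (unit_fst_lt1 y Hy Hne).
  unfold cayley_re. rewrite dist2_unit_one by exact Hy. field. lra.
Qed.

Lemma cayley_inv_spec X Y : 0 < Y ->
  in_disc (cayley_inv X Y) /\ cayley_re (cayley_inv X Y) = X /\ cayley_im (cayley_inv X Y) = Y.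
Proof.
  intro HY. assert (HN : 0 < X * X + (Y + 1) * (Y + 1)) by nra.
  assert (Hd : dist2 (cayley_inv X Y) (1, 0) = 4 / (X * X + (Y + 1) * (Y + 1)))
    by (unfold cayley_inv, dist2; simpl; field; lra).
  assert (Hn : 1 - nrm2 (cayley_inv X Y) = 4 * Y / (X * X + (Y + 1) * (Y + 1)))
    by (unfold cayley_inv, nrm2; simpl; field; lra).
  unfold cayley_re, cayley_im, in_disc. rewrite Hd, Hn. repeat split.
  - enough (0 < 4 * Y / (X * X + (Y + 1) * (Y + 1))) by lra.
    apply Rdiv_lt_0_compat; lra.
  - unfold cayley_inv; simpl. field. lra.
  - field. lra.
Qed.

Lemma div_eq_div_iff a b c d : b <> 0 -> d <> 0 -> (a / b = c / d <-> a * d = c * b).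
Proof.
  intros Hb Hd. split; intro E.
  - apply (Rmult_eq_compat_r (b * d)) in E. field_simplify in E; auto.
    replace (a * d) with (a * d / 1) by field. rewrite E. field.
  - apply (Rmult_eq_reg_r (b * d)); [| apply Rmult_integral_contrapositive; auto].
    field_simplify; auto. replace (a * d) with (c * b) by exact (eq_sym E). field.
Qed.

Lemma on_geod_one y z : nrm2 y = 1 -> y <> (1, 0) ->
  on_geod (1, 0) y z <-> in_disc z /\ cayley_re z = cayley_re y.
Proof.
  intros Hy Hne. pose proof (unit_fst_lt1 y Hy Hne) as Hy1.
  rewrite (cayley_re_unit y Hy Hne).
  enough (Hline : in_disc z -> (cayley_re z = - snd y / (1 - fst y) <->
                               snd y * dist2 z (1, 0) = 2 * snd z * (1 - fst y))).
  2:{ intro Hz. pose proof (dist2_pos_disc_one _ Hz). unfold cayley_re.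
      rewrite div_eq_div_iff by lra. lra. }
  destruct y as [y1 y2], z as [z1 z2]; simpl in *.
  split.
  - intros [Hz [A [[c1 c2] [Hnz [H1 [H2 H3]]]]]]. split; [exact Hz |].
    apply (Hline Hz). unfold nrm2, dist2 in *; simpl in *.
    assert (HA : A = c1) by lra. rewrite HA in *. clear H1 HA.
    destruct (Req_dec c1 0) as [Hc1 | Hc1].
    + subst c1. assert (Hc2 : c2 <> 0) by (intro; subst; destruct Hnz as [h | h]; apply h; reflexivity).
      assert (Hy2 : y2 * c2 = 0) by lra. assert (Hz2 : z2 * c2 = 0) by lra.
      apply Rmult_integral in Hy2, Hz2.
      destruct Hy2 as [-> | ]; [| contradiction]. destruct Hz2 as [-> | ]; [ring | contradiction].
    + apply (Rmult_eq_reg_l c1); [| exact Hc1].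
      assert (Ed : c1 * ((z1 - 1) * (z1 - 1) + (z2 - 0) * (z2 - 0)) = 2 * z2 * c2) by lra.
      assert (Ey : c2 * y2 = c1 * (1 - y1)) by lra.
      transitivity (y2 * (c1 * ((z1 - 1) * (z1 - 1) + (z2 - 0) * (z2 - 0)))); [ring |].
      rewrite Ed. transitivity (2 * z2 * (c2 * y2)); [ring |]. rewrite Ey. ring.
  - intros [Hz Hre]. split; [exact Hz |].
    apply (Hline Hz) in Hre. unfold nrm2, dist2 in *; simpl in *.
    exists y2, (y2, 1 - y1). simpl. split; [right; intro E; injection E; lra |].
    split; [ring |]. split; [lra |]. nra.
Qed.

Lemma hcirc_one r z : 0 < r -> in_disc z ->
  hcirc (1, 0) r z <-> cayley_im z = (1 - r) / r.
Proof.
  intros Hr Hz. pose proof (dist2_pos_disc_one z Hz) as Hd.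
  rewrite hcirc_iff by (unfold nrm2; simpl; ring).
  unfold cayley_im. rewrite div_eq_div_iff by lra. split.
  - intros [E _]. lra.
  - intro E. split; [lra |]. intro Hone. subst z. unfold dist2 in Hd. simpl in Hd. lra.
Qed.

Lemma hcirc_power_vertical y r z : nrm2 y = 1 -> y <> (1, 0) -> in_disc z ->
  cayley_re z = cayley_re y ->
  (1 - r) * dist2 z y - r * (1 - nrm2 z)
  = dist2 z (1, 0) * cayley_im z * ((1 - r) * dist2 y (1, 0) * cayley_im z / 4 - r).
Proof.
  intros Hy Hne Hz Hre.
  pose proof (dist2_pos_disc_one z Hz) as Hdz.
  pose proof (dist2_unit_one_pos y Hy Hne) as Hdy.
  pose proof (cayley_dist2 z y ltac:(lra) ltac:(lra)) as Hc.
  rewrite Hre, (cayley_im_unit y Hy) in Hc.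
  assert (Ezy : dist2 z y = cayley_im z ^ 2 * dist2 z (1, 0) * dist2 y (1, 0) / 4).
  { replace (cayley_im z ^ 2) with ((cayley_re y - cayley_re y) ^ 2 + (cayley_im z - 0) ^ 2) by ring.
    rewrite Hc. field. lra. }
  assert (Ez : 1 - nrm2 z = cayley_im z * dist2 z (1, 0)) by (unfold cayley_im; field; lra).
  rewrite Ezy, Ez. field.
Qed.

Lemma hcirc_vertical y r z : nrm2 y = 1 -> y <> (1, 0) -> 0 < r -> in_disc z ->
  cayley_re z = cayley_re y -> hcirc y r z ->
  (1 - r) * dist2 y (1, 0) * cayley_im z = 4 * r.
Proof.
  intros Hy Hne Hr Hz Hre Hcirc.
  apply (hcirc_iff y r z Hy) in Hcirc as [E _].
  pose proof (hcirc_power_vertical y r z Hy Hne Hz Hre) as P.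
  pose proof (dist2_pos_disc_one z Hz). pose proof (cayley_im_pos z Hz).
  assert (Hprod : dist2 z (1, 0) * cayley_im z *
                  ((1 - r) * dist2 y (1, 0) * cayley_im z / 4 - r) = 0) by lra.
  apply Rmult_integral in Hprod as [Hprod | Hprod]; nra.
Qed.

Lemma hball_vertical y r z : nrm2 y = 1 -> y <> (1, 0) -> in_disc z ->
  cayley_re z = cayley_re y ->
  hball y r z <-> (1 - r) * dist2 y (1, 0) * cayley_im z < 4 * r.
Proof.
  intros Hy Hne Hz Hre.
  rewrite (hball_iff y r z Hy).
  pose proof (hcirc_power_vertical y r z Hy Hne Hz Hre) as P.
  pose proof (dist2_pos_disc_one z Hz). pose proof (cayley_im_pos z Hz).
  assert (Hpos : 0 < dist2 z (1, 0) * cayley_im z) by nra.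
  split; intro Hlt; nra.
Qed.

Lemma arcosh_mean_inv q : 0 < q -> arcosh ((q + / q) / 2) = Rabs (ln q).
Proof.
  intro Hq. unfold arcosh.
  replace ((q + / q) / 2 * ((q + / q) / 2) - 1) with (Rsqr ((q - / q) / 2))
    by (unfold Rsqr; field; lra).
  rewrite sqrt_Rsqr_abs.
  destruct (Rle_or_lt 1 q) as [H1 | H1].
  - assert (/ q <= 1) by (rewrite <- Rinv_1; apply Rinv_le_contravar; lra).
    rewrite Rabs_right by lra. assert (0 <= ln q).
    { destruct H1 as [H1 | <-]; [rewrite <- ln_1; left; apply ln_increasing; lra | rewrite ln_1; lra]. }
    rewrite (Rabs_right (ln q)) by lra.
    f_equal. field. lra.
  - assert (1 < / q) by (rewrite <- Rinv_1; apply Rinv_lt_contravar; nra).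
    rewrite Rabs_left by lra. rewrite Rabs_left by (rewrite <- ln_1; apply ln_increasing; lra).
    rewrite <- ln_Rinv by lra. f_equal. field. lra.
Qed.

Lemma exp_half_ln q : 0 < q -> exp (ln q / 2) = sqrt q.
Proof.
  intro Hq. rewrite <- (exp_ln q Hq) at 2.
  replace (ln q) with (ln q / 2 + ln q / 2) at 2 by field.
  rewrite exp_plus, sqrt_square; [reflexivity | left; apply exp_pos].
Qed.

Lemma hdist_vertical z w : in_disc z -> in_disc w -> cayley_re z = cayley_re w ->
  hdist z w = Rabs (ln (cayley_im z / cayley_im w)).
Proof.
  intros Hz Hw Hre.
  pose proof (dist2_pos_disc_one z Hz). pose proof (dist2_pos_disc_one w Hw).
  pose proof (cayley_im_pos z Hz). pose proof (cayley_im_pos w Hw).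
  pose proof (cayley_dist2 z w ltac:(lra) ltac:(lra)) as Hc. rewrite Hre in Hc.
  assert (Ezw : dist2 z w = (cayley_im z - cayley_im w) ^ 2 * dist2 z (1, 0) * dist2 w (1, 0) / 4).
  { replace ((cayley_im z - cayley_im w) ^ 2)
      with ((cayley_re w - cayley_re w) ^ 2 + (cayley_im z - cayley_im w) ^ 2) by ring.
    rewrite Hc. field. lra. }
  assert (Ez : 1 - nrm2 z = cayley_im z * dist2 z (1, 0)) by (unfold cayley_im; field; lra).
  assert (Ew : 1 - nrm2 w = cayley_im w * dist2 w (1, 0)) by (unfold cayley_im; field; lra).
  rewrite <- arcosh_mean_inv by (apply Rdiv_lt_0_compat; lra).
  unfold hdist. rewrite Ezw, Ez, Ew. f_equal. field. lra.
Qed.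

Definition lam_at_radii (x : pt) (rx : R) (y : pt) (ry : R) (L : R) : Prop :=
  exists P Q, on_geod x y P /\ hcirc x rx P /\ on_geod x y Q /\ hcirc y ry Q /\
    (hball y ry P -> L = exp (- hdist P Q / 2)) /\
    (~ hball y ry P -> L = exp (hdist P Q / 2)).

Lemma lam_at_radii_turn u x rx y ry L : nrm2 u = 1 ->
  lam_at_radii x rx y ry L -> lam_at_radii (turn u x) rx (turn u y) ry L.
Proof.
  intros Hu [P [Q [GP [CP [GQ [CQ [Lin Lout]]]]]]].
  exists (turn u P), (turn u Q).
  rewrite hball_turn, hdist_turn by exact Hu.
  split; [| split; [| split; [| split]]]; auto using on_geod_turn, hcirc_turn.
Qed.

Lemma lam_at_radii_one y rx ry L : nrm2 y = 1 -> y <> (1, 0) -> 0 < rx < 1 -> 0 < ry < 1 ->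
  lam_at_radii (1, 0) rx y ry L ->
  L = sqrt ((1 - rx) / rx * ((1 - ry) / ry) * dist2 (1, 0) y / 4).
Proof.
  intros Hy Hne Hrx Hry [P [Q [GP [CP [GQ [CQ [Lin Lout]]]]]]].
  apply (on_geod_one y P Hy Hne) in GP as [HP HreP].
  apply (on_geod_one y Q Hy Hne) in GQ as [HQ HreQ].
  apply (hcirc_one rx P ltac:(lra) HP) in CP.
  pose proof (hcirc_vertical y ry Q Hy Hne ltac:(lra) HQ HreQ CQ) as EQ.
  pose proof (hball_vertical y ry P Hy Hne HP HreP) as HB.
  rewrite hdist_vertical in Lin, Lout by (auto; congruence).
  pose proof (dist2_unit_one_pos y Hy Hne) as Hdy.
  pose proof (cayley_im_pos P HP). pose proof (cayley_im_pos Q HQ).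
  set (q := cayley_im P / cayley_im Q) in *.
  assert (Hq : 0 < q) by (apply Rdiv_lt_0_compat; lra).
  assert (Eq : (1 - rx) / rx * ((1 - ry) / ry) * dist2 (1, 0) y / 4 = q).
  { unfold q. rewrite dist2_sym, <- CP.
    apply (Rmult_eq_reg_r (4 * ry * cayley_im Q)); [| nra].
    field_simplify; [nra | lra | lra]. }
  assert (Hqv : cayley_im P = q * cayley_im Q) by (unfold q; field; lra).
  assert (HBq : hball y ry P <-> q < 1) by (rewrite HB, Hqv; split; intro; nra).
  rewrite Eq, <- exp_half_ln by exact Hq.
  destruct (Rlt_or_le q 1) as [Hlt | Hge].
  - rewrite Lin by (apply HBq; exact Hlt).
    rewrite Rabs_left by (rewrite <- ln_1; apply ln_increasing; lra).
    f_equal. field.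
  - rewrite Lout by (rewrite HBq; lra).
    rewrite Rabs_right; [reflexivity |].
    destruct Hge as [Hgt | <-]; [rewrite <- ln_1; left; apply ln_increasing; lra | rewrite ln_1; lra].
Qed.

Lemma turn_self_neq x y : nrm2 x = 1 -> x <> y -> turn x y <> (1, 0).
Proof. intros Hx Hne E. rewrite <- (turn_self x Hx) in E. exact (Hne (eq_sym (turn_inj x _ _ Hx E))). Qed.

Lemma lam_at_radii_sqrt x rx y ry L : nrm2 x = 1 -> nrm2 y = 1 -> x <> y ->
  0 < rx < 1 -> 0 < ry < 1 -> lam_at_radii x rx y ry L ->
  L = sqrt ((1 - rx) / rx * ((1 - ry) / ry) * dist2 x y / 4).
Proof.
  intros Hx Hy Hne Hrx Hry HL.
  apply (lam_at_radii_turn x) in HL; [| exact Hx]. rewrite turn_self in HL by exact Hx.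
  replace (dist2 x y) with (dist2 (turn x x) (turn x y)) by (rewrite dist2_turn, Hx; ring).
  rewrite turn_self by exact Hx.
  apply lam_at_radii_one; auto using turn_self_neq.
  rewrite nrm2_turn, Hx, Hy. ring.
Qed.

Lemma geod_meets_hcirc x y r : nrm2 x = 1 -> nrm2 y = 1 -> x <> y -> 0 < r < 1 ->
  exists P, on_geod x y P /\ hcirc x r P.
Proof.
  intros Hx Hy Hne Hr.
  set (y' := turn x y).
  assert (Hy' : nrm2 y' = 1) by (unfold y'; rewrite nrm2_turn, Hx, Hy; ring).
  assert (Hne' : y' <> (1, 0)) by exact (turn_self_neq x y Hx Hne).
  assert (Hs : 0 < (1 - r) / r) by (apply Rdiv_lt_0_compat; lra).
  destruct (cayley_inv_spec (cayley_re y') ((1 - r) / r) Hs) as [Hin [Hre Him]].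
  set (P := cayley_inv (cayley_re y') ((1 - r) / r)) in *.
  assert (Hx' : nrm2 (cconj x) = 1) by (rewrite nrm2_cconj; exact Hx).
  exists (turn (cconj x) P). split.
  - pose proof (on_geod_turn (cconj x) _ _ _ Hx'
                 (proj2 (on_geod_one y' P Hy' Hne') (conj Hin Hre))) as G.
    unfold y' in G. rewrite turn_cconj_one, turnK in G by exact Hx. exact G.
  - pose proof (hcirc_turn (cconj x) _ _ _ Hx'
                 (proj2 (hcirc_one r P ltac:(lra) Hin) Him)) as C.
    rewrite turn_cconj_one in C. exact C.
Qed.

Lemma lam_at_radii_exists x rx y ry : nrm2 x = 1 -> nrm2 y = 1 -> x <> y ->
  0 < rx < 1 -> 0 < ry < 1 -> exists L, lam_at_radii x rx y ry L.
Proof.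
  intros Hx Hy Hne Hrx Hry.
  destruct (geod_meets_hcirc x y rx Hx Hy Hne Hrx) as [P [GP CP]].
  destruct (geod_meets_hcirc y x ry Hy Hx (not_eq_sym Hne) Hry) as [Q [GQ CQ]].
  assert (Hdec : {hball y ry P} + {~ hball y ry P}) by (unfold hball; apply Rlt_dec).
  destruct Hdec as [Hin | Hout].
  - exists (exp (- hdist P Q / 2)), P, Q.
    do 4 (split; [auto using on_geod_sym |]). split; [reflexivity | contradiction].
  - exists (exp (hdist P Q / 2)), P, Q.
    do 4 (split; [auto using on_geod_sym |]). split; [contradiction | reflexivity].
Qed.

Lemma lam_of_radii x y (Hx Hy : pt -> Prop) rx ry L : 0 < rx < 1 -> 0 < ry < 1 ->
  (forall z, Hx z <-> hcirc x rx z) -> (forall z, Hy z <-> hcirc y ry z) ->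
  lam_at_radii x rx y ry L -> lam x Hx y Hy L.
Proof.
  intros Hrx Hry Ex Ey [P [Q [GP [CP [GQ [CQ [Lin Lout]]]]]]].
  exists rx, ry, P, Q. tauto.
Qed.

Lemma radii_of_lam x y (Hx Hy : pt -> Prop) rx ry L : nrm2 x = 1 -> nrm2 y = 1 ->
  0 < rx -> 0 < ry ->
  (forall z, Hx z <-> hcirc x rx z) -> (forall z, Hy z <-> hcirc y ry z) ->
  lam x Hx y Hy L -> lam_at_radii x rx y ry L.
Proof.
  intros Hxn Hyn Hrx Hry Ex Ey [rx' [ry' [P [Q [_ [_ [Ex' [Ey' Hrest]]]]]]]].
  rewrite <- (hcirc_radius_unique x rx rx' Hx Hxn Hrx Ex Ex') in Hrest.
  rewrite <- (hcirc_radius_unique y ry ry' Hy Hyn Hry Ey Ey') in Hrest.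
  exists P, Q. exact Hrest.
Qed.

Lemma lam_sqrt x y (Hx Hy : pt -> Prop) rx ry L : nrm2 x = 1 -> nrm2 y = 1 -> x <> y ->
  0 < rx < 1 -> 0 < ry < 1 ->
  (forall z, Hx z <-> hcirc x rx z) -> (forall z, Hy z <-> hcirc y ry z) ->
  lam x Hx y Hy L -> L = sqrt ((1 - rx) / rx * ((1 - ry) / ry) * dist2 x y / 4).
Proof.
  intros Hxn Hyn Hne Hrx Hry Ex Ey HL.
  apply (lam_at_radii_sqrt x rx y ry L); auto.
  apply (radii_of_lam x y Hx Hy); auto; lra.
Qed.

Lemma lam_exists x y (Hx Hy : pt -> Prop) rx ry : nrm2 x = 1 -> nrm2 y = 1 -> x <> y ->
  0 < rx < 1 -> 0 < ry < 1 ->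
  (forall z, Hx z <-> hcirc x rx z) -> (forall z, Hy z <-> hcirc y ry z) ->
  exists L, lam x Hx y Hy L.
Proof.
  intros Hxn Hyn Hne Hrx Hry Ex Ey.
  destruct (lam_at_radii_exists x rx y ry Hxn Hyn Hne Hrx Hry) as [L HL].
  exists L. exact (lam_of_radii x y Hx Hy rx ry L Hrx Hry Ex Ey HL).
Qed.

Lemma nrm2_cis a : nrm2 (cis a) = 1.
Proof. unfold nrm2, cis; simpl. pose proof (sin2_cos2 a). unfold Rsqr in *. lra. Qed.

Lemma dist2_cis a b : dist2 (cis a) (cis b) = 4 * sin ((b - a) / 2) ^ 2.
Proof.
  unfold dist2, cis; simpl.
  pose proof (sin2_cos2 a). pose proof (sin2_cos2 b). unfold Rsqr in *.
  transitivity (2 - 2 * cos (b - a)).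
  { rewrite cos_minus. nra. }
  replace (b - a) with (2 * ((b - a) / 2)) at 1 by field.
  rewrite cos_2a_sin. ring.
Qed.

Lemma lam_cis a b h (Ha Hb : pt -> Prop) ra rb :
  b - a = 2 * h -> 0 < sin h -> 0 < ra < 1 -> 0 < rb < 1 ->
  (forall z, Ha z <-> hcirc (cis a) ra z) -> (forall z, Hb z <-> hcirc (cis b) rb z) ->
  (exists L, lam (cis a) Ha (cis b) Hb L) /\
  (forall L, lam (cis a) Ha (cis b) Hb L -> L = sqrt ((1 - ra) / ra * ((1 - rb) / rb)) * sin h).
Proof.
  intros Hh Hs Hra Hrb Ea Eb.
  assert (Hd : dist2 (cis a) (cis b) = 4 * sin h ^ 2)
    by (rewrite dist2_cis; replace ((b - a) / 2) with h by lra; reflexivity).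
  assert (Hne : cis a <> cis b) by (intro E; rewrite E in Hd; unfold dist2 in Hd; nra).
  split; [exact (lam_exists _ _ _ _ ra rb (nrm2_cis a) (nrm2_cis b) Hne Hra Hrb Ea Eb) |].
  intros L HL. rewrite (lam_sqrt _ _ _ _ ra rb L (nrm2_cis a) (nrm2_cis b) Hne Hra Hrb Ea Eb HL), Hd.
  assert (0 < (1 - ra) / ra * ((1 - rb) / rb))
    by (apply Rmult_lt_0_compat; apply Rdiv_lt_0_compat; lra).
  replace (_ * (4 * sin h ^ 2) / 4) with (Rsqr (sqrt ((1 - ra) / ra * ((1 - rb) / rb)) * sin h)).
  - apply sqrt_Rsqr. left. apply Rmult_lt_0_compat; [apply sqrt_lt_R0 |]; assumption.
  - rewrite Rsqr_mult, Rsqr_sqrt by lra. unfold Rsqr. field. lra.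
Qed.

Lemma rot_cis p a : rot p (cis a) = cis (a + 2 * PI / INR p).
Proof. unfold rot, cis; simpl. rewrite cos_plus, sin_plus. f_equal; ring. Qed.

Lemma rot_scale p s z : rot p (s * fst z, s * snd z) = (s * fst (rot p z), s * snd (rot p z)).
Proof. unfold rot; simpl. f_equal; ring. Qed.

Lemma rot_invariant_horocycles p (H0 H1 : pt -> Prop) a :
  is_horocycle_at (cis a) H0 -> is_horocycle_at (cis (a + 2 * PI / INR p)) H1 ->
  (forall z, H1 z <-> exists u, H0 u /\ z = rot p u) ->
  exists r, 0 < r < 1 /\ (forall z, H0 z <-> hcirc (cis a) r z) /\
            (forall z, H1 z <-> hcirc (cis (a + 2 * PI / INR p)) r z).
Proof.
  intros [r [Hr E0]] [r1 [Hr1 E1]] Hrot.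
  exists r. split; [exact Hr |]. split; [exact E0 |].
  enough (r = r1) by (subst r1; exact E1).
  apply (hcirc_opposite_radius (cis (a + 2 * PI / INR p))); [apply nrm2_cis | lra |].
  set (z0 := ((1 - 2 * r) * fst (cis a), (1 - 2 * r) * snd (cis a))).
  assert (Hz0 : H1 (rot p z0)).
  { apply Hrot. exists z0. split; [| reflexivity].
    apply E0, hcirc_opposite; [apply nrm2_cis | lra]. }
  apply E1 in Hz0. unfold z0 in Hz0. rewrite rot_scale, rot_cis in Hz0. exact Hz0.
Qed.

Lemma sin_sq_add a b :
  sin (a + b) ^ 2 = sin a ^ 2 + 2 * cos (a + b) * sin a * sin b + sin b ^ 2.
Proof.
  rewrite sin_plus, cos_plus.
  pose proof (sin2_cos2 a). pose proof (sin2_cos2 b). unfold Rsqr in *. nra.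
Qed.

Lemma lambda_ptolemy A B a b : 0 < A -> 0 < B ->
  sqrt (A * A) * sin (a + b) * (sqrt (B * B) * sin (a + b))
  = (sqrt (A * B) * sin a) ^ 2
    + 2 * cos (a + b) * (sqrt (A * B) * sin a) * (sqrt (B * A) * sin b)
    + (sqrt (B * A) * sin b) ^ 2.
Proof.
  intros HA HB.
  rewrite !sqrt_square by lra. rewrite (Rmult_comm B A).
  assert (W : sqrt (A * B) * sqrt (A * B) = A * B) by (apply sqrt_sqrt; nra).
  transitivity (A * B * sin (a + b) ^ 2); [ring |].
  rewrite sin_sq_add. set (w := sqrt (A * B)) in *. rewrite <- W. ring.
Qed.

Theorem mainTheorem2 (p : nat) (phi : R) (Hv Hw : Z -> pt -> Prop) :
  (2 <= p)%nat ->
  0 < phi < 2 * PI / INR p ->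
  (forall m, is_horocycle_at (vpt p m) (Hv m)) ->
  (forall m, is_horocycle_at (wpt p phi m) (Hw m)) ->
  (forall m z, Hv (m + 1)%Z z <-> exists u, Hv m u /\ z = rot p u) ->
  (forall m z, Hw (m + 1)%Z z <-> exists u, Hw m u /\ z = rot p u) ->
  (exists c c' a b,
      lam (vpt p 0) (Hv 0%Z) (vpt p 1) (Hv 1%Z) c /\
      lam (wpt p phi 0) (Hw 0%Z) (wpt p phi 1) (Hw 1%Z) c' /\
      lam (vpt p 0) (Hv 0%Z) (wpt p phi 0) (Hw 0%Z) a /\
      lam (wpt p phi 0) (Hw 0%Z) (vpt p 1) (Hv 1%Z) b) /\
  (forall c c' a b,
      lam (vpt p 0) (Hv 0%Z) (vpt p 1) (Hv 1%Z) c ->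
      lam (wpt p phi 0) (Hw 0%Z) (wpt p phi 1) (Hw 1%Z) c' ->
      lam (vpt p 0) (Hv 0%Z) (wpt p phi 0) (Hw 0%Z) a ->
      lam (wpt p phi 0) (Hw 0%Z) (vpt p 1) (Hv 1%Z) b ->
      c * c' = a ^ 2 + 2 * cos (PI / INR p) * a * b + b ^ 2).
Proof.
  intros Hp Hphi HV HW RV RW.
  set (t := 2 * PI / INR p) in *.
  assert (Ht : 0 < t <= PI).
  { assert (2 <= INR p) by (apply (le_INR 2); exact Hp).
    assert (t * INR p = 2 * PI) by (unfold t; field; lra).
    assert (0 < t) by (apply Rdiv_lt_0_compat; pose proof PI_RGT_0; lra).
    split; nra. }
  assert (Ev : vpt p 0 = cis 0 /\ vpt p 1 = cis (0 + t))
    by (unfold vpt, t; split; f_equal; simpl; field; apply not_0_INR; lia).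
  assert (Ew : wpt p phi 0 = cis phi /\ wpt p phi 1 = cis (phi + t))
    by (unfold wpt, t; split; f_equal; simpl; field; apply not_0_INR; lia).
  destruct (rot_invariant_horocycles p (Hv 0%Z) (Hv 1%Z) 0) as [rv [Hrv [Ev0 Ev1]]];
    [rewrite <- (proj1 Ev); apply HV | fold t; rewrite <- (proj2 Ev); apply HV | apply (RV 0%Z) |].
  destruct (rot_invariant_horocycles p (Hw 0%Z) (Hw 1%Z) phi) as [rw [Hrw [Ew0 Ew1]]];
    [rewrite <- (proj1 Ew); apply HW | fold t; rewrite <- (proj2 Ew); apply HW | apply (RW 0%Z) |].
  fold t in Ev1, Ew1. destruct Ev as [-> ->], Ew as [-> ->].
  destruct (lam_cis 0 (0 + t) (t / 2) (Hv 0%Z) (Hv 1%Z) rv rv) as [[c Hc] Lc];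
    [field | apply sin_gt_0; lra | auto ..].
  destruct (lam_cis phi (phi + t) (t / 2) (Hw 0%Z) (Hw 1%Z) rw rw) as [[c' Hc'] Lc'];
    [field | apply sin_gt_0; lra | auto ..].
  destruct (lam_cis 0 phi (phi / 2) (Hv 0%Z) (Hw 0%Z) rv rw) as [[a Ha] La];
    [field | apply sin_gt_0; lra | auto ..].
  destruct (lam_cis phi (0 + t) ((t - phi) / 2) (Hw 0%Z) (Hv 1%Z) rw rv) as [[b Hb] Lb];
    [field | apply sin_gt_0; lra | auto ..].
  split; [exists c, c', a, b; auto |].
  intros c0 c0' a0 b0 Hc0 Hc0' Ha0 Hb0.
  rewrite (Lc c0 Hc0), (Lc' c0' Hc0'), (La a0 Ha0), (Lb b0 Hb0).
  replace (PI / INR p) with (t / 2) by (unfold t; field; apply not_0_INR; lia).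
  replace (t / 2) with (phi / 2 + (t - phi) / 2) by field.
  apply lambda_ptolemy; apply Rdiv_lt_0_compat; lra.
Qed.
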